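(* Let $q$ be a prime power and let $\mathcal{L}$ be a Cameron-Liebler line class with parameter $x$ in $\mathrm{PG}(3,q)$. Suppose there is a point $P$ and a plane $\pi$ of $\mathrm{PG}(3,q)$ with $P\in\pi$ such that (1) $(\mathsf{Line}(\pi)\setminus \mathsf{Star}(P))\cap \mathcal{L}=\emptyset$, and (2) $\mathsf{Star}(P)\setminus \mathsf{Line}(\pi)\subseteq \mathcal{L}$. Then $$\mathcal{L}':=\bigl(\mathcal{L}\cup (\mathsf{Line}(\pi)\setminus \mathsf{Star}(P))\bigr)\setminus (\mathsf{Star}(P)\setminus \mathsf{Line}(\pi))$$ is a Cameron-Liebler line class in $\mathrm{PG}(3,q)$ with the same parameter $x$.
   Context: $\mathrm{PG}(3,q)$ is the 3-dimensional projective space over $\mathbb{F}_q$. A spread of $\mathrm{PG}(3,q)$ is a set of $q^2+1$ lines partitioning the point set. A set $\mathcal{L}$ of lines is a Cameron-Liebler line class with parameter $x$ if $x$ is a non-negative integer such that $|S\cap\mathcal{L}|=x$ for every spread $S$ of $\mathrm{PG}(3,q)$. For a point $P$, $\mathsf{Star}(P)$ denotes the set of all lines through $P$; for a plane $\pi$, $\mathsf{Line}(\pi)$ denotes the set of all lines contained in $\pi$. *)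

(* PG(3,q) is modelled as the lattice of subspaces of F^4,
   F a finite field with q = #|F| elements.  A subspace is represented by its
   canonical matrix <<A>>%MS : 'M[F]_4 (rows span the subspace). *)
From HB Require Import structures.
From mathcomp Require Import all_boot all_order all_algebra all_fingroup all_field.
Set Implicit Arguments. Unset Strict Implicit. Unset Printing Implicit Defensive.
Import GRing.Theory.
Local Open Scope ring_scope.

Section PG3.
Variable F : finFieldType.

Definition subsp (k : nat) : {set 'M[F]_4} :=
  [set A : 'M[F]_4 | (\rank A == k)%N && (<<A>>%MS == A)].

Definition points : {set 'M[F]_4} := subsp 1.
Definition lines  : {set 'M[F]_4} := subsp 2.
Definition planes : {set 'M[F]_4} := subsp 3.

Definition Star (P : 'M[F]_4) : {set 'M[F]_4} :=
  [set l in lines | (P <= l)%MS].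
Definition Line (pi : 'M[F]_4) : {set 'M[F]_4} :=
  [set l in lines | (l <= pi)%MS].

Definition is_spread (S : {set 'M[F]_4}) : Prop :=
  [/\ S \subset lines,
      #|S| = (#|F| ^ 2 + 1)%N &
      forall P, P \in points -> exists! l, l \in S /\ (P <= l)%MS].

Definition CL_class (L : {set 'M[F]_4}) (x : nat) : Prop :=
  L \subset lines /\ forall S, is_spread S -> #|S :&: L| = x.

End PG3.

From HB Require Import structures.
From mathcomp Require Import all_boot all_order all_algebra all_fingroup all_field.
From mathcomp Require Import mxabelem zify.
Set Implicit Arguments. Unset Strict Implicit. Unset Printing Implicit Defensive.

(* A spread has exactly one line through P and exactly one line in pi: a
   spread line outside pi meets pi in at most q - 1 nonzero vectors, so
   q^2 + 1 such lines cannot cover the q^3 - 1 nonzero vectors of pi.  Hence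
   in every spread S the lines through P outside pi and the lines of pi
   missing P are equally many (none if the line of S through P lies in pi,
   one of each otherwise), and the exchange leaves #|S :&: L| unchanged. *)

Lemma card_bigcup_le (I T : finType) (P : pred I) (G : I -> {set T}) :
  #|\bigcup_(i | P i) G i| <= \sum_(i | P i) #|G i|.
Proof.
elim/big_rec2: _ => [|i n U _ IH]; first by rewrite cards0.
by apply: leq_trans (leq_card_setU _ _).1 _; rewrite leq_add2l.
Qed.

Lemma cardsID_sym (T : finType) (S A B : {set T}) :
  #|S :&: A| = #|S :&: B| -> #|S :&: (A :\: B)| = #|S :&: (B :\: A)|.
Proof. by move=> eqAB; rewrite !setIDA !cardsD eqAB setIAC. Qed.

Lemma cardsI_swap (T : finType) (S L A B : {set T}) :
  A :&: L = set0 -> B \subset L ->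
  #|S :&: ((L :|: A) :\: B)| + #|S :&: B| = #|S :&: L| + #|S :&: A|.
Proof.
move=> AL0 BL.
have AB0 : A :&: B = set0 by apply/eqP; rewrite -subset0 -AL0 setIS.
have -> : (L :|: A) :\: B = (L :\: B) :|: A.
  by rewrite setDUl; congr (_ :|: _); apply/setDidPl; rewrite -setI_eq0 AB0.
have LBA0 : (S :&: (L :\: B)) :&: (S :&: A) = set0.
  apply/eqP; rewrite -subset0 -AL0; apply/subsetP => y.
  by rewrite !inE => /and3P[/and3P[_ _ ->] _ ->].
rewrite setIUr cardsU LBA0 cards0 subn0 addnAC setIDA.
by congr (_ + _); rewrite -(cardsID B (S :&: L)) -setIA (setIidPr BL) addnC.
Qed.

Section Incidence.
Variable F : finFieldType.

Lemma genmx_point (v : 'rV[F]_4) : v != 0%R -> <<v>>%MS \in points F.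
Proof. by move=> nz_v; rewrite inE genmx_id eqxx andbT genmxE rank_rV nz_v. Qed.

Lemma lines_in_plane_meet (l m pi : 'M[F]_4) :
  l \in lines F -> m \in lines F -> pi \in planes F ->
  (l <= pi)%MS -> (m <= pi)%MS -> (l :&: m)%MS != 0%R.
Proof.
rewrite !inE => /andP[/eqP rl _] /andP[/eqP rm _] /andP[/eqP rpi _] l_pi m_pi.
have rlm := mxrank_sum_cap l m.
have : \rank (l + m)%MS <= \rank pi by apply: mxrankS; rewrite addsmx_sub l_pi m_pi.
rewrite -mxrank_eq0 rpi; lia.
Qed.

Lemma rank_cap_line_plane (l pi : 'M[F]_4) :
  l \in lines F -> ~~ (l <= pi)%MS -> \rank (l :&: pi)%MS <= 1.
Proof.
rewrite inE => /andP[/eqP rl _]; apply: contraNleq => r_gt1.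
have eq_cap : (l :&: pi == l)%MS.
  rewrite -(mxrank_leqif_eq (capmxSl l pi)).2 eqn_leq mxrankS ?capmxSl //.
  by rewrite rl.
by case/andP: eq_cap => _ /submx_trans->; rewrite ?capmxSr.
Qed.

Lemma card_rowg_nz m (A : 'M[F]_(m, 4)) :
  #|rowg A :\ 0%R| = (#|F| ^ \rank A).-1.
Proof. by rewrite -card_rowg (cardsD1 0%R (rowg A)) (group1 (rowg A)). Qed.

End Incidence.

Section Spread.
Variables (F : finFieldType) (S : {set 'M[F]_4}).
Hypothesis spreadS : is_spread S.

Lemma spread_line l : l \in S -> l \in lines F.
Proof. by case: spreadS => /subsetP sub_lines _ _; apply: sub_lines. Qed.

Lemma spread_eq_of_meet l m : l \in S -> m \in S -> (l :&: m)%MS != 0%R -> l = m.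
Proof.
move=> lS mS; rewrite -nz_row_eq0 => /genmx_point pt.
case: spreadS => _ _ /(_ _ pt)[n [_ uniq_n]].
have := nz_row_sub (l :&: m)%MS; rewrite sub_capmx => /andP[v_l v_m].
by rewrite -(uniq_n l) ?(uniq_n m) ?genmxE.
Qed.

Lemma spread_Star P : P \in points F -> exists l, S :&: Star P = [set l].
Proof.
case: spreadS => _ _ /[apply][[l [[lS Pl] uniq_l]]]; exists l.
apply/setP => m; rewrite in_setI [_ \in Star _]inE in_set1.
apply/idP/eqP => [/andP[mS /andP[_ Pm]]|->]; first by rewrite (uniq_l m).
by rewrite lS spread_line.
Qed.

Lemma spread_meets_plane pi : pi \in planes F -> exists2 m, m \in S & (m <= pi)%MS.
Proof.
move=> pi_plane; apply/exists_inP; apply: contraT => /exists_inPn m_out.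
have [_ card_S cover_S] := spreadS; have q_gt1 := card_finNzRing_gt1 F.
have cover_pi :
    rowg pi :\ 0%R \subset \bigcup_(m in S) (rowg (m :&: pi)%MS :\ 0%R).
  apply/subsetP => v; rewrite !inE => /andP[nz_v v_pi].
  have [l [[lS v_l] _]] := cover_S _ (genmx_point nz_v).
  apply/bigcupP; exists l => //; rewrite !inE nz_v sub_capmx v_pi andbT.
  by rewrite genmxE in v_l.
have small_cap m : m \in S -> #|rowg (m :&: pi)%MS :\ 0%R| <= #|F|.-1.
  move=> mS; rewrite card_rowg_nz -!subn1 leq_sub2r // -{2}(expn1 #|F|).
  by rewrite leq_pexp2l ?(ltnW q_gt1) ?rank_cap_line_plane ?spread_line ?m_out.
have := leq_trans (subset_leq_card cover_pi) (card_bigcup_le _ _).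
move/leq_trans/(_ (leq_sum _ small_cap)).
rewrite sum_nat_const card_S card_rowg_nz.
move: pi_plane; rewrite inE => /andP[/eqP-> _].
have : #|F| < #|F| * #|F| by rewrite ltn_Pmulr ?(ltnW q_gt1).
by rewrite !expnS expn0 !muln1 -!subn1; nia.
Qed.

Lemma spread_Line pi : pi \in planes F -> exists l, S :&: Line pi = [set l].
Proof.
move=> pi_plane; have [l lS l_pi] := spread_meets_plane pi_plane; exists l.
apply/setP => m; rewrite in_setI [_ \in Line _]inE in_set1.
apply/idP/eqP => [/andP[mS /andP[m_line m_pi]]|->].
  apply: spread_eq_of_meet => //.
  by rewrite (lines_in_plane_meet m_line _ pi_plane) ?spread_line.
by rewrite lS spread_line.
Qed.

End Spread.

Lemma spread_card_Line_Star (F : finFieldType) (S : {set 'M[F]_4}) P pi :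
  is_spread S -> P \in points F -> pi \in planes F ->
  #|S :&: (Line pi :\: Star P)| = #|S :&: (Star P :\: Line pi)|.
Proof.
move=> spreadS P_pt pi_plane; apply: cardsID_sym.
have [l ->] := spread_Line spreadS pi_plane.
by have [m ->] := spread_Star spreadS P_pt; rewrite !cards1.
Qed.

Theorem lemma1 (F : finFieldType) (L : {set 'M[F]_4}) (x : nat)
  (P pi : 'M[F]_4) :
  CL_class L x ->
  P \in points F -> pi \in planes F -> (P <= pi)%MS ->
  (Line pi :\: Star P) :&: L = set0 ->
  Star P :\: Line pi \subset L ->
  CL_class ((L :|: (Line pi :\: Star P)) :\: (Star P :\: Line pi)) x.
Proof.
move=> [L_lines card_L] P_pt pi_plane _ Line_out Star_in; split.
  apply: subset_trans (subsetDl _ _) _; rewrite subUset L_lines.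
  by apply/subsetP => l /setDP[]; rewrite inE => /andP[].
move=> S spreadS; apply: (@addIn #|S :&: (Star P :\: Line pi)|).
by rewrite cardsI_swap // card_L // spread_card_Line_Star.
Qed.
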